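(* Let $m\geq 2$. Up to isomorphism, $\operatorname{Turan}(2m+2, m+1)$ is the unique connected graph with parameters $\bigl(2m, 4\binom{m}{2}\bigr)$.
   Context: All graphs are finite, simple and undirected. The $K_3$-degree of a vertex $v$ is the number of triangles containing $v$. A graph $G$ has parameters $(r_2,r_3)$ if every vertex has degree $r_2$ and every vertex has $K_3$-degree $r_3$. For $r\mid n$, $\operatorname{Turan}(n,r)$ is the complete multipartite graph on $n$ vertices with $r$ parts each of size $n/r$; thus $\operatorname{Turan}(2m+2,m+1)$ is the complete multipartite graph with $m+1$ parts of size $2$. *)

From mathcomp Require Import all_boot.
Set Implicit Arguments. Unset Strict Implicit. Unset Printing Implicit Defensive.

Definition simple_graph (T : finType) (e : rel T) : Prop :=
  symmetric e /\ irreflexive e.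

Definition deg (T : finType) (e : rel T) (v : T) : nat := #|[set y | e v y]|.

Definition is_triangle (T : finType) (e : rel T) (t : {set T}) : bool :=
  (#|t| == 3) && [forall y in t, forall z in t, (y != z) ==> e y z].

Definition k3deg (T : finType) (e : rel T) (v : T) : nat :=
  #|[set t : {set T} | is_triangle e t && (v \in t)]|.

Definition has_params (T : finType) (e : rel T) (r2 r3 : nat) : Prop :=
  forall v : T, deg e v = r2 /\ k3deg e v = r3.

Definition connected_graph (T : finType) (e : rel T) : Prop :=
  0 < #|T| /\ forall x y : T, connect e x y.

(* Turan(n, r): complete multipartite graph on vertices 0..n-1, with the
   r parts {i | i mod r = k}, each of size n/r when r divides n. *)
Definition turan (n r : nat) : rel 'I_n := fun i j => (i %% r) != (j %% r).
Arguments turan n r : clear implicits.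

Definition graph_iso (T S : finType) (e : rel T) (f : rel S) : Prop :=
  exists phi : T -> S, bijective phi /\ forall x y, f (phi x) (phi y) = e x y.

(* For an edge xy, call the neighbours of y that are neither x nor adjacent
   to x the private neighbours of y with respect to x.  If the graph is
   2m-regular and every vertex lies in 2m(m-1) triangles, the private degrees
   around any vertex sum to 2m; comparing these sums at the two ends of an
   edge forces every private degree to be exactly 1.  Hence two non-adjacent
   vertices with a common neighbour have the same neighbourhood, and in a
   connected graph every vertex has exactly one non-neighbour besides itself:
   the graph is the cocktail-party graph on 2m + 2 vertices, which is
   Turan(2m + 2, m + 1). *)

From mathcomp Require Import all_boot zify.
Set Implicit Arguments. Unset Strict Implicit. Unset Printing Implicit Defensive.

Section Neighbourhoods.
Variables (T : finType) (e : rel T).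
Hypotheses (sym_e : symmetric e) (irr_e : irreflexive e).

Definition nbhd x := [set y | e x y].
Definition common_nbhd x y := nbhd x :&: nbhd y.
Definition private_nbhd x y := nbhd y :\: nbhd x :\ x.
Definition antinbhd x := [set y | (y != x) && ~~ e x y].

Lemma in_nbhd x y : (y \in nbhd x) = e x y.
Proof. by rewrite inE. Qed.

Lemma adj_neq x y : e x y -> x != y.
Proof. by apply: contraTneq => ->; rewrite irr_e. Qed.

Lemma common_nbhdC x y : common_nbhd x y = common_nbhd y x.
Proof. exact: setIC. Qed.

Lemma card_nbhd_antinbhd x : #|T| = (#|nbhd x| + #|antinbhd x|).+1.
Proof.
rewrite -(cardsC [set x]) cards1 add1n; congr _.+1.
rewrite -cardsUI; have -> : nbhd x :&: antinbhd x = set0.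
  by apply/setP => y; rewrite !inE; case: (e x y); rewrite ?andbF.
rewrite cards0 addn0; apply: eq_card => y; rewrite !inE.
by case: (y =P x) => [->|_]; rewrite ?irr_e //= orbN.
Qed.

Lemma sum_nbhd_edge (F : T -> nat) w a : e w a ->
  \sum_(b in nbhd a) F b =
    F w + \sum_(b in common_nbhd w a) F b + \sum_(b in private_nbhd w a) F b.
Proof.
move=> ewa; rewrite (big_setD1 w) ?in_nbhd 1?sym_e // (big_setID (nbhd w)) /= addnA.
have -> : (nbhd a :\ w) :&: nbhd w = common_nbhd w a.
  by apply/setP => b; rewrite !inE; case: (b =P w) => [->|]; rewrite ?irr_e ?andbF // andbC.
by rewrite /private_nbhd setDDl setUC -setDDl.
Qed.

Lemma card_nbhd_edge w a : e w a ->
  #|nbhd a| = (#|common_nbhd w a| + #|private_nbhd w a|).+1.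
Proof. by move=> /(sum_nbhd_edge (fun=> 1)); rewrite !sum1_card add1n. Qed.

Lemma triangle_adj t a b : is_triangle e t -> a \in t -> b \in t -> a != b -> e a b.
Proof.
by case/andP=> _ /forall_inP/(_ a)/[apply]/forall_inP/(_ b)/[apply]/implyP.
Qed.

Lemma is_triangle3 x y z : e x y -> e x z -> e y z -> is_triangle e [set x; y; z].
Proof.
move=> exy exz eyz.
have /andP[ne_xy ne_xz] : (x != y) && (x != z) by rewrite !adj_neq.
rewrite /is_triangle -setUA cardsU1 cards2 !inE adj_neq // negb_or ne_xy ne_xz /=.
apply/forall_inP => a; rewrite !inE => /or3P[] /eqP->;
apply/forall_inP => b; rewrite !inE => /or3P[] /eqP->;
by rewrite ?eqxx //=; apply/implyP => _; rewrite // sym_e.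
Qed.

Lemma triangles_on_edge v y : e v y ->
  #|[set t | is_triangle e t && (v \in t) && (y \in t)]| = #|common_nbhd v y|.
Proof.
move=> evy; have ne_vy := adj_neq evy.
have inj : {in common_nbhd v y &, injective (fun z => [set v; y; z])}.
  move=> z1 z2; rewrite !inE => /andP[evz1 eyz1] _ E.
  have : z1 \in [set v; y; z2] by rewrite -E !inE eqxx orbT.
  by rewrite !inE => /orP[/orP[]|] /eqP // Ez; move: evz1 eyz1; rewrite Ez irr_e.
rewrite -(card_in_imset inj); apply: eq_card => t; rewrite !inE.
apply/idP/imsetP => [/andP[/andP[tri vt] yt]|[z]]; last first.
  by rewrite !inE => /andP[evz eyz] ->; rewrite is_triangle3 // !inE !eqxx !orbT.
have : #|t :\ v :\ y| == 1.
  move: tri => /andP[/eqP + _]; rewrite (cardsD1 v) vt (cardsD1 y) !inE yt eq_sym ne_vy.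
  by rewrite /= => -[]; rewrite add0n => ->.
case/cards1P=> z tz; have : z \in t :\ v :\ y by rewrite tz set11.
rewrite !inE => /and3P[zy zv zt]; exists z.
  by rewrite !inE !(triangle_adj tri) // eq_sym.
by rewrite -(setD1K vt) -(setD1K (_ : y \in t :\ v)) ?tz ?setUA // !inE eq_sym ne_vy.
Qed.

Lemma double_k3deg v : 2 * k3deg e v = \sum_(y in nbhd v) #|common_nbhd v y|.
Proof.
set S := [set t | is_triangle e t && (v \in t)].
have -> : 2 * k3deg e v = \sum_(t in S) \sum_(y in t :\ v) 1.
  rewrite mulnC -sum_nat_const; apply: eq_bigr => t; rewrite inE => /andP[tri vt].
  by rewrite sum1_card; move: tri => /andP[/eqP]; rewrite (cardsD1 v) vt; case.
rewrite (exchange_big_dep (mem (nbhd v))) /= => [|t y]; last first.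
  by rewrite !inE => /andP[tri vt] /andP[yv yt]; rewrite (triangle_adj tri) // eq_sym.
apply: eq_bigr => y; rewrite in_nbhd => evy; rewrite sum1dep_card -triangles_on_edge //.
by apply: eq_card => t; rewrite !inE eq_sym adj_neq.
Qed.

Section Regular.
Variable r : nat.
Hypothesis regular : forall v, #|nbhd v| = r.

Lemma card_private_nbhdC x y : e x y -> #|private_nbhd x y| = #|private_nbhd y x|.
Proof.
move=> exy; have := card_nbhd_edge exy; rewrite sym_e in exy.
by have := card_nbhd_edge exy; rewrite !regular common_nbhdC => -> [/addnI].
Qed.

Lemma card_private_nbhd_gt0 x y z :
  e x y -> e x z -> ~~ e y z -> y != z -> 0 < #|private_nbhd x y|.
Proof.
move=> exy exz nyz ne_yz; rewrite card_private_nbhdC //; apply/card_gt0P.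
by exists z; rewrite !inE exz (negbTE nyz) eq_sym ne_yz.
Qed.

Lemma private_nbhd_common_le w a b : e w a -> b \in common_nbhd w a ->
  #|private_nbhd w a| <= #|private_nbhd a b| + #|private_nbhd w b|.
Proof.
move=> ewa; rewrite !inE => /andP[ewb eab].
rewrite -(cardsID (nbhd b) (private_nbhd w a)) addnC card_private_nbhdC //.
apply: leq_add; apply: subset_leq_card; apply/subsetP => z; rewrite !inE.
  case/and4P=> nbz _ nwz eaz; rewrite nbz eaz !andbT.
  by apply/eqP => zb; move: nwz; rewrite zb ewb.
by case/andP=> /and3P[zw nwz _] ebz; rewrite zw nwz ebz.
Qed.

Lemma sum_card_private_nbhd v :
  \sum_(y in nbhd v) #|private_nbhd v y| + 2 * k3deg e v + r = r * r.
Proof.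
rewrite double_k3deg -{1}(regular v) -sum1_card -!big_split /= -{1}(regular v) -sum_nat_const.
by apply: eq_bigr => y; rewrite in_nbhd => /card_nbhd_edge; rewrite regular; lia.
Qed.

Section Extremal.
Hypothesis r_gt2 : 2 < r.
Hypothesis k3deg_extremal : forall v, 2 * k3deg e v = r * (r - 2).

Lemma sum_card_private_nbhd_extremal v : \sum_(y in nbhd v) #|private_nbhd v y| = r.
Proof. by have := sum_card_private_nbhd v; rewrite k3deg_extremal; nia. Qed.

Lemma card_private_nbhd_le1 w a : e w a -> #|private_nbhd w a| <= 1.
Proof.
(* Summing private degrees around a and around w gives
   2 r >= d * (#|common_nbhd w a| + 4) = d * (r + 3 - d), false for 2 <= d < r. *)
move=> ewa; have eaw : e a w by rewrite sym_e.
set d := #|private_nbhd w a|; rewrite leqNgt; apply/negP => d_gt1.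
have Sa := sum_card_private_nbhd_extremal a.
have Sw := sum_card_private_nbhd_extremal w.
rewrite (sum_nbhd_edge _ ewa) -card_private_nbhdC // -/d in Sa.
rewrite (sum_nbhd_edge _ eaw) -/d common_nbhdC in Sw.
have lbZ : d <= \sum_(b in private_nbhd w a) #|private_nbhd a b|.
  rewrite /d -sum1_card; apply: leq_sum => b; rewrite !inE => /and3P[bw nwb eab].
  by apply: (card_private_nbhd_gt0 eab eaw); rewrite // sym_e.
have lbY : d <= \sum_(b in private_nbhd a w) #|private_nbhd w b|.
  rewrite /d card_private_nbhdC // -sum1_card; apply: leq_sum => b.
  rewrite !inE => /and3P[ba nab ewb].
  by apply: (card_private_nbhd_gt0 ewb ewa); rewrite // sym_e.
have lbX : #|common_nbhd w a| * d <=
    \sum_(b in common_nbhd w a) (#|private_nbhd a b| + #|private_nbhd w b|).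
  by rewrite -sum_nat_const; apply: leq_sum => b; apply: private_nbhd_common_le.
have := card_nbhd_edge ewa; rewrite regular -/d big_split /= in lbX *.
nia.
Qed.

Lemma card_private_nbhd1 x y : e x y -> #|private_nbhd x y| = 1.
Proof.
move=> exy; apply/eqP; rewrite eqn_leq card_private_nbhd_le1 // lt0n.
apply/negP => /eqP p0; have := sum_card_private_nbhd_extremal x.
rewrite (big_setD1 y) ?in_nbhd //= p0.
have : \sum_(b in nbhd x :\ y) #|private_nbhd x b| <= #|nbhd x :\ y|.
  rewrite -sum1_card; apply: leq_sum => b /setD1P[_].
  by rewrite in_nbhd; apply: card_private_nbhd_le1.
by have := cardsD1 y (nbhd x); rewrite in_nbhd exy regular; lia.
Qed.

Lemma card_common_nbhd x y : e x y -> #|common_nbhd x y| = r - 2.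
Proof.
by move=> exy; have := card_nbhd_edge exy; rewrite regular card_private_nbhd1 //; lia.
Qed.

Lemma private_nbhd_nonadj c x y :
  e c x -> e c y -> x != y -> ~~ e x y -> private_nbhd x c = [set y].
Proof.
move=> ecx ecy xy nxy; apply/eqP; rewrite eq_sym eqEcard cards1 card_private_nbhd1 1?sym_e //.
by rewrite sub1set !inE eq_sym xy nxy ecy.
Qed.

Lemma adj_common_nbr c x y w : e c x -> e c y -> x != y -> ~~ e x y ->
  e c w -> w != x -> w != y -> e x w.
Proof.
move=> ecx ecy xy nxy ecw wx wy.
move/setP/(_ w): (private_nbhd_nonadj ecx ecy xy nxy).
by rewrite !inE wx ecw (negbTE wy) andbT => /negbFE.
Qed.

Lemma nbhd_diff_sub_private c x y : x != y -> ~~ e x y -> e c x -> e c y ->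
  nbhd x :\: nbhd y \subset private_nbhd c x.
Proof.
move=> xy nxy ecx ecy; apply/subsetP => u; rewrite !inE => /andP[nyu exu].
rewrite exu andbT; apply/andP; split; first by apply: contraNneq nyu => ->; rewrite sym_e.
apply: contra nyu => ecu; apply: (adj_common_nbr ecy ecx); rewrite 1?eq_sym //.
- by rewrite sym_e.
- by apply: contraNneq nxy => ->.
- by rewrite adj_neq.
Qed.

Lemma nbhd_eq_nonadj c x y : x != y -> ~~ e x y -> e c x -> e c y -> nbhd x = nbhd y.
Proof.
(* A neighbour z of x missing from nbhd y is the unique private neighbour of x
   with respect to every common neighbour of x and y; a common neighbour of x
   and z is one of these, yet z is adjacent to it. *)
move=> xy nxy ecx ecy; apply/eqP; rewrite eqEcard !regular leqnn andbT.
apply/subsetP => z exz; apply: contraT => nyz.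
have Dz : z \in nbhd x :\: nbhd y by rewrite inE nyz.
have : 0 < #|common_nbhd x z| by rewrite card_common_nbhd -?in_nbhd //; lia.
case/card_gt0P => c'; rewrite !inE => /andP[exc' ezc'].
have eyc' : e y c'.
  apply: contraT => nyc'; have Dc' : c' \in nbhd x :\: nbhd y by rewrite !inE nyc'.
  have /card_le1_eqP : #|private_nbhd c x| <= 1 by rewrite card_private_nbhd1.
  move/(_ c' z); rewrite !(subsetP (nbhd_diff_sub_private xy nxy ecx ecy)) //.
  by move=> /(_ isT isT) Ec'; move: ezc'; rewrite Ec' irr_e.
have [ec'x ec'y] : e c' x /\ e c' y by rewrite sym_e [e c' y]sym_e.
move: Dz => /(subsetP (nbhd_diff_sub_private xy nxy ec'x ec'y)).
by rewrite !inE [e c' z]sym_e ezc' andbF.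
Qed.

Hypothesis connected : forall x y, connect e x y.

Lemma nbhd_antinbhd_eq x y : y \in antinbhd x -> nbhd y = nbhd x.
Proof.
set C := [set z | e x z || (nbhd z == nbhd x)].
have step a b : e a b -> a \in C -> b \in C.
  move=> eab; rewrite !inE => /orP[exa|/eqP Na]; last by rewrite -in_nbhd -Na in_nbhd eab.
  have [//|nxb] := boolP (e x b); have [->|bx] := eqVneq b x; first by rewrite eqxx orbT.
  by rewrite (nbhd_eq_nonadj bx _ eab) ?eqxx ?orbT // sym_e.
have closedC : closed e C by move=> a b eab; apply/idP/idP; apply: step; rewrite // sym_e.
rewrite inE => /andP[_ nxy].
have : y \in C by rewrite -(closed_connect closedC (connected x y)) !inE eqxx orbT.
by rewrite inE (negbTE nxy) => /eqP.
Qed.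

Lemma card_antinbhd_extremal x : #|antinbhd x| = 1.
Proof.
have : 0 < #|nbhd x| by rewrite regular; lia.
case/card_gt0P => a; rewrite in_nbhd => exa.
rewrite -(card_private_nbhd1 exa); apply: eq_card => y; apply/idP/idP => [Ay|]; last first.
  by rewrite !inE => /and3P[-> ->].
move: (Ay); rewrite !inE => /andP[-> ->] /=.
by rewrite sym_e -in_nbhd (nbhd_antinbhd_eq Ay) in_nbhd.
Qed.

End Extremal.

End Regular.

Section Cocktail.
Hypothesis cocktail : forall x, #|antinbhd x| = 1.

Definition mate x := odflt x [pick y in antinbhd x].

Lemma antinbhdE x : antinbhd x = [set mate x].
Proof.
have /cards1P[z Az] : #|antinbhd x| == 1 by rewrite cocktail.
rewrite Az /mate; case: pickP => [y|/(_ z)]; rewrite Az !inE ?eqxx //.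
by move=> /eqP ->.
Qed.

Lemma adjE x y : e x y = (y != x) && (y != mate x).
Proof.
move/setP/(_ y): (antinbhdE x); rewrite !inE.
by case: (y =P x) => [->|_] /=; [rewrite irr_e | move=> <-; rewrite negbK].
Qed.

Lemma mate_neq x : mate x != x.
Proof. by move/setP/(_ (mate x)): (antinbhdE x); rewrite !inE eqxx => /andP[]. Qed.

Lemma mateK : involutive mate.
Proof.
move=> x; apply/esym/set1P; rewrite -antinbhdE inE eq_sym mate_neq sym_e adjE.
by rewrite eqxx andbF.
Qed.

Lemma card_nbhd_cocktail x : #|nbhd x| = #|T| - 2.
Proof. by rewrite (card_nbhd_antinbhd x) cocktail; lia. Qed.

Lemma card_common_nbhd_cocktail x y : e x y -> #|common_nbhd x y| = #|T| - 4.
Proof.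
move=> exy; have := exy; rewrite adjE => /andP[yx ymx].
have -> : common_nbhd x y = nbhd x :\ y :\ mate y.
  apply/setP => z; rewrite !inE !adjE.
  by case: (z == x); case: (z == mate x); case: (z == y); case: (z == mate y).
have my_nbhd : mate y \in nbhd x :\ y.
  rewrite !inE mate_neq adjE (inj_eq (can_inj mateK)) yx andbT.
  by apply: contraNneq ymx => <-; rewrite mateK.
have := cardsD1 y (nbhd x); have := cardsD1 (mate y) (nbhd x :\ y).
by rewrite my_nbhd in_nbhd exy card_nbhd_cocktail; lia.
Qed.

Lemma k3deg_cocktail v : 2 * k3deg e v = (#|T| - 2) * (#|T| - 4).
Proof.
rewrite double_k3deg -(card_nbhd_cocktail v) -sum_nat_const.
by apply: eq_bigr => y; rewrite in_nbhd; apply: card_common_nbhd_cocktail.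
Qed.

Lemma cocktail_connected : 2 < #|T| -> connected_graph e.
Proof.
move=> T_gt2; split=> [|x y]; first lia.
have [exy|nxy] := boolP (e x y); first exact: connect1.
have [->|yx] := eqVneq y x; first exact: connect0.
have {nxy yx} -> : y = mate x by move: nxy; rewrite adjE yx => /negPn/eqP.
have : 0 < #|nbhd x| by rewrite card_nbhd_cocktail; lia.
case/card_gt0P => w; rewrite in_nbhd => exw; apply: connect_trans (connect1 exw) _.
apply: connect1; move: exw; rewrite !adjE (inj_eq (can_inj mateK)) => /andP[wx wmx].
by rewrite eq_sym wmx eq_sym wx.
Qed.

Definition reps := [set x | enum_rank x < enum_rank (mate x)].
Definition rep x := if x \in reps then x else mate x.

Lemma mate_reps x : (mate x \in reps) = (x \notin reps).
Proof.
rewrite !inE mateK ltnNge leq_eqVlt negb_or val_eqE (inj_eq enum_rank_inj).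
by rewrite eq_sym mate_neq.
Qed.

Lemma card_reps : #|T| = #|reps| + #|reps|.
Proof.
rewrite -(cardsC reps); have -> : ~: reps = mate @^-1: reps.
  by apply/setP => x; rewrite in_setC -mate_reps [RHS]inE.
by rewrite card_preimset //; apply: can_inj mateK.
Qed.

Lemma rep_reps x : rep x \in reps.
Proof. by rewrite /rep; case: ifPn; rewrite // mate_reps. Qed.

Lemma rep_eq x y : (rep x == rep y) = (y == x) || (y == mate x).
Proof.
have mate_inj := can_inj mateK.
have [->|yx] := eqVneq y x; first by rewrite eqxx.
have [->|ymx] := eqVneq y (mate x).
  by rewrite /rep mate_reps mateK; case: ifP; rewrite eqxx.
rewrite /= /rep; apply/negbTE/eqP.
case: ifP => _; case: ifP => _.
- by move=> xy; rewrite xy eqxx in yx.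
- by move=> xmy; rewrite xmy mateK eqxx in ymx.
- by move=> mxy; rewrite mxy eqxx in ymx.
- by move/mate_inj => xy; rewrite xy eqxx in yx.
Qed.

Lemma cocktail_iso_turan M : #|T| = M + M -> graph_iso e (turan (M + M) M).
Proof.
move=> cardT; have cR : #|reps| = M by have := card_reps; lia.
set s := enum reps.
have idx_lt x : index (rep x) s < M by rewrite -cR cardE index_mem mem_enum rep_reps.
have phi_lt x : (x \notin reps) * M + index (rep x) s < M + M.
  by have := idx_lt x; case: (x \notin reps); lia.
have modM x : ((x \notin reps) * M + index (rep x) s) %% M = index (rep x) s.
  by rewrite modnMDl modn_small.
have idx_eq x y : (index (rep x) s == index (rep y) s) = (y == x) || (y == mate x).
  by rewrite (inj_in_eq (@index_inj _ x s)) ?mem_enum ?rep_reps ?rep_eq.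
(* x goes to the index of its pair {x, mate x} among the representatives,
   shifted by M when x is not the representative. *)
exists (fun x => Ordinal (phi_lt x)); split=> [|x y]; last first.
  by rewrite /turan /= !modM idx_eq adjE negb_or.
apply: inj_card_bij; last by rewrite card_ord cardT.
move=> x y /(congr1 val) /= E; have /eqP := congr1 (modn^~ M) E.
rewrite !modM => Eidx; move: (Eidx); rewrite idx_eq => /orP[/eqP -> //|/eqP ymx].
have := idx_lt x; move: E; rewrite (eqP Eidx) ymx mate_reps; case: (x \in reps) => /=; lia.
Qed.

End Cocktail.

End Neighbourhoods.

Lemma card_antinbhd_iso (T S : finType) (e : rel T) (f : rel S) (phi : T -> S) :
    bijective phi -> (forall x y, f (phi x) (phi y) = e x y) ->
  forall x, #|antinbhd e x| = #|antinbhd f (phi x)|.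
Proof.
move=> bij_phi phiE x; rewrite -(on_card_preimset (onW_bij _ bij_phi)).
by apply: eq_card => y; rewrite !inE phiE (inj_eq (bij_inj bij_phi)).
Qed.

Lemma card_antinbhd_turan M (i : 'I_(M + M)) : #|antinbhd (turan (M + M) M) i| = 1.
Proof.
have modM (k : 'I_(M + M)) : k %% M = if k < M then k : nat else k - M.
  have := ltn_ord k; case: ifPn => [/modn_small //|]; rewrite -leqNgt => le_Mk lt_k.
  by rewrite -{1}(subnK le_Mk) modnDr modn_small //; lia.
have mate_lt : (if i < M then i + M else i - M) < M + M by have := ltn_ord i; case: ifP; lia.
apply: (@eq_card1 _ (Ordinal mate_lt)) => k; rewrite !inE /turan negbK -!val_eqE /= !modM.
by have := ltn_ord i; have := ltn_ord k; case: ifP; case: ifP => *; apply/idP/idP; lia.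
Qed.

Theorem corollary5p3 (m : nat) : 2 <= m ->
  forall (T : finType) (e : rel T), simple_graph e ->
    (connected_graph e /\ has_params e (2 * m) (4 * 'C(m, 2)))
    <-> graph_iso e (turan (2 * m + 2) (m + 1)).
Proof.
move=> m_ge2 T e [sym_e irr_e].
have bin2m : 2 * 'C(m, 2) = m * (m - 1) by rewrite mul_bin_left bin1 mulnC.
rewrite (_ : 2 * m + 2 = (m + 1) + (m + 1)); last by lia.
split=> [[[T_gt0 conn] params] | [phi [bij_phi phiE]]].
  have regular v : #|nbhd e v| = 2 * m by case: (params v).
  have k3deg_extremal v : 2 * k3deg e v = 2 * m * (2 * m - 2).
    by case: (params v) => _ ->; nia.
  have r_gt2 : 2 < 2 * m by lia.
  have cocktail := card_antinbhd_extremal sym_e irr_e regular r_gt2 k3deg_extremal conn.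
  apply: (cocktail_iso_turan sym_e irr_e cocktail); case/card_gt0P: T_gt0 => x _.
  by rewrite (card_nbhd_antinbhd irr_e x) regular cocktail; lia.
have cocktail x : #|antinbhd e x| = 1.
  by rewrite (card_antinbhd_iso bij_phi phiE) card_antinbhd_turan.
have cardT : #|T| = 2 * m + 2 by rewrite (bij_eq_card bij_phi) card_ord; lia.
split; first by apply: (cocktail_connected sym_e irr_e cocktail); rewrite cardT; lia.
move=> v; rewrite /deg -/(nbhd e v) card_nbhd_cocktail // cardT; split; first lia.
by have := k3deg_cocktail sym_e irr_e cocktail v; rewrite cardT; nia.
Qed.
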